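(* Let $p,p'\in\mathbb{N}$ and let $Q,Q'$ be λ-terms. If $\lambda y.Q\in\mathcal{E}_p$ and $BT(Q)\le^\eta_{p'}BT(Q')$, then $\lambda y.Q'\in\mathcal{E}_{p+p'}$.
   Context: $\mathtt{I}=\lambda x.x$; $\mathcal{E}$ is the set of λ-terms $Q$ with $Q\twoheadrightarrow_{\beta\eta}\mathtt{I}$. Size on β-normal forms: $|Q|=0$ if $Q\twoheadrightarrow_\beta\mathtt{I}$, and $|Q|=\max\{m,\max_{i\le m}|\lambda z_i.Q_i|+1\}$ if $Q\twoheadrightarrow_\beta\lambda yz_1\dots z_m.yQ_1\cdots Q_m$; $\mathcal{E}_p=\{Q\in\mathcal{E}:|Q|<p\}$. Böhm-like trees: coinductively generated by $U::=\bot\mid\lambda x_1\dots x_n.yU_1\cdots U_k$. The relation $\le^\eta_p$ is the greatest relation on Böhm-like trees such that $U\le^\eta_pV$ implies either $U=V=\bot$, or $U=\lambda\vec x.yU_1\cdots U_k$ and $V=\lambda\vec xz_1\dots z_m.yV_1\cdots V_kQ_1\cdots Q_m$ with $m\le p$, the $z_\ell$ not free in $yU_1\cdots U_kV_1\cdots V_k$, each $Q_i$ the Böhm tree of a term $Q'_i$ with $\lambda z_i.Q'_i\in\mathcal{E}_p$, and $U_j\le^\eta_pV_j$ for all $j\le k$. *)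

From mathcomp Require Import ssreflect ssrfun ssrbool eqtype ssrnat seq.
Set Implicit Arguments. Unset Strict Implicit. Unset Printing Implicit Defensive.

Inductive term : Type :=
| Var (n : nat)
| App (M N : term)
| Lam (M : term).

Definition upren (f : nat -> nat) (n : nat) : nat :=
  if n is n'.+1 then (f n').+1 else 0.

Fixpoint rename (f : nat -> nat) (M : term) : term :=
  match M with
  | Var n => Var (f n)
  | App M1 M2 => App (rename f M1) (rename f M2)
  | Lam M1 => Lam (rename (upren f) M1)
  end.

Definition upsub (s : nat -> term) (n : nat) : term :=
  if n is n'.+1 then rename S (s n') else Var 0.

Fixpoint inst (s : nat -> term) (M : term) : term :=
  match M with
  | Var n => s n
  | App M1 M2 => App (inst s M1) (inst s M2)
  | Lam M1 => Lam (inst (upsub s) M1)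
  end.

Definition subst0 (N : term) (n : nat) : term :=
  if n is n'.+1 then Var n' else N.

Inductive beta : term -> term -> Prop :=
| beta_redex M N : beta (App (Lam M) N) (inst (subst0 N) M)
| beta_appl M M' N : beta M M' -> beta (App M N) (App M' N)
| beta_appr M N N' : beta N N' -> beta (App M N) (App M N')
| beta_lam M M' : beta M M' -> beta (Lam M) (Lam M').

(* one-step beta-eta reduction; eta: \x. M x -> M  when x not free in M *)
Inductive betaeta : term -> term -> Prop :=
| be_beta M N : betaeta (App (Lam M) N) (inst (subst0 N) M)
| be_eta M : betaeta (Lam (App (rename S M) (Var 0))) M
| be_appl M M' N : betaeta M M' -> betaeta (App M N) (App M' N)
| be_appr M N N' : betaeta N N' -> betaeta (App M N) (App M N')
| be_lam M M' : betaeta M M' -> betaeta (Lam M) (Lam M').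

Inductive star (R : term -> term -> Prop) : term -> term -> Prop :=
| star_refl M : star R M M
| star_step M N P : R M N -> star R N P -> star R M P.

Definition betas := star beta.
Definition betaetas := star betaeta.

Definition lams (n : nat) (M : term) : term := iter n Lam M.
Definition apps (h : term) (Ms : seq term) : term := foldl App h Ms.

Definition Iterm : term := Lam (Var 0).

Definition inE (Q : term) : Prop := betaetas Q Iterm.

(* [bindvar k M] is the de Bruijn rendering of  \z. M  where z is the
   (free) variable with index k in M; the result lives in the same context. *)
Definition bindvar (k : nat) (M : term) : term :=
  Lam (rename (fun j => if j == k then 0 else j.+1) M).

(* size |Q| (as a relation):
   |Q| = 0 if Q ->>_beta I;
   |Q| = max{m, max_i |\z_i.Q_i| + 1} if Q ->>_beta \y z_1..z_m. y Q_1 .. Q_m.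
   Under the m+1 binders, y has index m and z_(i+1) has index m-(i+1). *)
Inductive esize : term -> nat -> Prop :=
| esize_I Q : betas Q Iterm -> esize Q 0
| esize_hnf Q m (Qs : seq term) (ss : seq nat) :
    betas Q (lams m.+1 (apps (Var m) Qs)) ->
    size Qs = m -> size ss = m ->
    (forall i, i < m -> esize (bindvar (m - i.+1) (nth (Var 0) Qs i)) (nth 0 ss i)) ->
    esize Q (maxn m (foldr maxn 0 (map S ss))).

Definition inEp (p : nat) (Q : term) : Prop :=
  inE Q /\ exists s, esize Q s /\ s < p.

(* Node n y Us  represents  \x_1..x_n. y U_1 .. U_k  (y a de Bruijn index) *)
CoInductive blt : Type :=
| Bot
| Node (n y : nat) (args : seq blt).

Definition has_hnf (M : term) : Prop :=
  exists n y Ms, betas M (lams n (apps (Var y) Ms)).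

(* graph of the Boehm tree function, as a greatest relation *)
Definition bt_sim (R : term -> blt -> Prop) : Prop :=
  forall M U, R M U ->
    (U = Bot /\ ~ has_hnf M) \/
    exists n y (Ms : seq term) (Us : seq blt),
      [/\ betas M (lams n (apps (Var y) Ms)), U = Node n y Us,
          size Us = size Ms &
          forall j, j < size Ms -> R (nth (Var 0) Ms j) (nth Bot Us j)].

Definition IsBT (M : term) (U : blt) : Prop :=
  exists R, bt_sim R /\ R M U.

Definition lift_sim (k : nat) (R : nat -> blt -> blt -> Prop) : Prop :=
  forall c U V, R c U V ->
    (U = Bot /\ V = Bot) \/
    exists n y (Us Vs : seq blt),
      [/\ U = Node n y Us,
          V = Node n (if y < c + n then y else y + k) Vs,
          size Vs = size Us &
          forall j, j < size Us -> R (c + n) (nth Bot Us j) (nth Bot Vs j)].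

Definition tree_lift (k c : nat) (U V : blt) : Prop :=
  exists R, lift_sim k R /\ R c U V.

(* V = \x_1..x_n z_1..z_m. y V_1..V_k Q_1..Q_m : the z's are the m innermost
   binders, so y becomes y+m; "z not free in V_j" means V_j is the lift by m
   of a tree W_j (living in the context of U), and U_j <= W_j. *)
Definition le_sim (p : nat) (R : blt -> blt -> Prop) : Prop :=
  forall U V, R U V ->
    (U = Bot /\ V = Bot) \/
    exists n y k m (Us Vs Qs : seq blt),
      [/\ m <= p, U = Node n y Us /\ V = Node (n + m) (y + m) (Vs ++ Qs),
          [/\ size Us = k, size Vs = k & size Qs = m],
          (forall i, i < m -> exists Q' : term,
               IsBT Q' (nth Bot Qs i) /\ inEp p (bindvar (m - i.+1) Q')) &
          (forall j, j < k -> exists W : blt,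
               tree_lift m 0 W (nth Bot Vs j) /\ R (nth Bot Us j) W)].

Definition le_eta (p : nat) (U V : blt) : Prop :=
  exists R, le_sim p R /\ R U V.

From mathcomp Require Import ssreflect ssrfun ssrbool eqtype ssrnat seq zify.
Set Implicit Arguments. Unset Strict Implicit.

(* Call a Böhm tree an eta-tree for a variable x when it has the shape
   \z_1..z_m. x T_1 .. T_m with each T_i an eta-tree for z_i: these are the
   Böhm trees of the finite eta-expansions of x, and the size |.| of the paper
   is read off such a tree (m at the root, one more for each nesting level).
   Thus \y.Q in E_p says that BT(Q) is an eta-tree for y of size < p.  A step
   of <=^eta_p' turns a node \x. y U_1 .. U_m into
   \x z_1 .. z_m'. y V_1 .. V_m Q_1 .. Q_m' with m' <= p' and \z_i.Q_i in E_p':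
   the result is again an eta-tree for y, every node gains at most p' binders
   and the new subtrees have size < p', so the size grows by at most p'.
   Reading the new eta-tree back gives \y.Q' ->>_betaeta I and |\y.Q'| < p + p'. *)

(** * Renaming and substitution *)

Lemma upren_ext f g : f =1 g -> upren f =1 upren g.
Proof. by move=> fg [|n] //=; rewrite fg. Qed.

Lemma rename_ext M : forall f g, f =1 g -> rename f M = rename g M.
Proof.
elim: M => [n|M1 IH1 M2 IH2|M1 IH] f g fg /=; first by rewrite fg.
- by rewrite (IH1 f g fg) (IH2 f g fg).
- by rewrite (IH _ _ (upren_ext fg)).
Qed.

Lemma upsub_ext s t : s =1 t -> upsub s =1 upsub t.
Proof. by move=> st [|n] //=; rewrite st. Qed.

Lemma inst_ext M : forall s t, s =1 t -> inst s M = inst t M.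
Proof.
elim: M => [n|M1 IH1 M2 IH2|M1 IH] s t st /=; first by rewrite st.
- by rewrite (IH1 s t st) (IH2 s t st).
- by rewrite (IH _ _ (upsub_ext st)).
Qed.

Lemma rename_id M : forall f, f =1 id -> rename f M = M.
Proof.
elim: M => [n|M1 IH1 M2 IH2|M1 IH] f f_id /=; first by rewrite f_id.
- by rewrite IH1 // IH2.
- by rewrite IH // => -[|n] //=; rewrite f_id.
Qed.

Lemma inst_id M : forall s, s =1 Var -> inst s M = M.
Proof.
elim: M => [n|M1 IH1 M2 IH2|M1 IH] s s_id /=; first by rewrite s_id.
- by rewrite IH1 // IH2.
- by rewrite IH // => -[|n] //=; rewrite s_id.
Qed.

Lemma rename_comp M : forall f g, rename f (rename g M) = rename (f \o g) M.
Proof.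
elim: M => [n|M1 IH1 M2 IH2|M1 IH] f g //=; first by rewrite IH1 IH2.
by rewrite IH; congr Lam; apply: rename_ext => -[|n].
Qed.

Lemma inst_rename M : forall s f, inst s (rename f M) = inst (s \o f) M.
Proof.
elim: M => [n|M1 IH1 M2 IH2|M1 IH] s f //=; first by rewrite IH1 IH2.
by rewrite IH; congr Lam; apply: inst_ext => -[|n].
Qed.

Lemma rename_inst M : forall f s, rename f (inst s M) = inst (rename f \o s) M.
Proof.
elim: M => [n|M1 IH1 M2 IH2|M1 IH] f s //=; first by rewrite IH1 IH2.
rewrite IH; congr Lam; apply: inst_ext => -[|n] //=.
by rewrite !rename_comp.
Qed.

Lemma inst_comp M : forall s t, inst s (inst t M) = inst (inst s \o t) M.
Proof.
elim: M => [n|M1 IH1 M2 IH2|M1 IH] s t //=; first by rewrite IH1 IH2.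
rewrite IH; congr Lam; apply: inst_ext => -[|n] //=.
by rewrite inst_rename rename_inst.
Qed.

Lemma inst_subst0 s N M :
  inst s (inst (subst0 N) M) = inst (subst0 (inst s N)) (inst (upsub s) M).
Proof.
rewrite !inst_comp; apply: inst_ext => -[|n] //=.
by rewrite inst_rename inst_id.
Qed.

Lemma rename_subst0 f N M :
  rename f (inst (subst0 N) M) = inst (subst0 (rename f N)) (rename (upren f) M).
Proof. by rewrite rename_inst inst_rename; apply: inst_ext => -[|n]. Qed.

(** * Reductions *)

Lemma star1 R M N : R M N -> star R M N.
Proof. by move=> MN; apply: star_step MN (star_refl _ _). Qed.

Lemma star_trans R M N P : star R M N -> star R N P -> star R M P.
Proof. by elim=> // A B C AB _ IH /IH; apply: star_step. Qed.

Lemma star_map R R' (F : term -> term) :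
  (forall x y, R x y -> R' (F x) (F y)) ->
  forall M N, star R M N -> star R' (F M) (F N).
Proof.
move=> RF M N; elim=> [A|A B C AB _ IH]; first exact: star_refl.
exact: star_step (RF _ _ AB) IH.
Qed.

Lemma star_sub_star (R R' : term -> term -> Prop) :
  (forall x y, R x y -> star R' x y) -> forall M N, star R M N -> star R' M N.
Proof.
move=> RR' M N; elim=> [A|A B C AB _ IH]; first exact: star_refl.
exact: star_trans (RR' _ _ AB) IH.
Qed.

Lemma betas_app M M' N N' : betas M M' -> betas N N' -> betas (App M N) (App M' N').
Proof.
move=> MM' NN'; apply: star_trans.
- by apply: (star_map (F := App^~ N)) MM' => *; apply: beta_appl.
- by apply: (star_map (F := App M')) NN' => *; apply: beta_appr.
Qed.

Lemma betas_lam M M' : betas M M' -> betas (Lam M) (Lam M').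
Proof. by apply: (star_map (F := Lam)) => *; apply: beta_lam. Qed.

Lemma betaetas_app M M' N N' :
  betaetas M M' -> betaetas N N' -> betaetas (App M N) (App M' N').
Proof.
move=> MM' NN'; apply: star_trans.
- by apply: (star_map (F := App^~ N)) MM' => *; apply: be_appl.
- by apply: (star_map (F := App M')) NN' => *; apply: be_appr.
Qed.

Lemma betaetas_lam M M' : betaetas M M' -> betaetas (Lam M) (Lam M').
Proof. by apply: (star_map (F := Lam)) => *; apply: be_lam. Qed.

Lemma betas_betaetas M N : betas M N -> betaetas M N.
Proof.
apply: star_sub_star => x y xy; apply: star1.
by elim: xy => *; [apply: be_beta|apply: be_appl|apply: be_appr|apply: be_lam].
Qed.

Lemma beta_rename M N f : beta M N -> beta (rename f M) (rename f N).
Proof.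
move=> MN; elim: MN f => {M N} /=.
- by move=> M N f; rewrite rename_subst0; apply: beta_redex.
- by move=> *; apply: beta_appl.
- by move=> *; apply: beta_appr.
- by move=> *; apply: beta_lam.
Qed.

Lemma betas_rename f M N : betas M N -> betas (rename f M) (rename f N).
Proof. by apply: star_map => x y; apply: beta_rename. Qed.

Lemma beta_rename_inv f M N : beta (rename f M) N ->
  exists2 M', beta M M' & N = rename f M'.
Proof.
move E : (rename f M) => X MN; elim: MN f M E => {X N}.
- move=> B N f [n|[n|M1 M2|B'] N'|B''] //= [<- <-].
  by exists (inst (subst0 N') B'); [apply: beta_redex | rewrite rename_subst0].
- move=> M0 M0' N0 _ IH f [n|M1 M2|B] //= [/IH [M1' ? ->] <-].
  by exists (App M1' M2); first apply: beta_appl.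
- move=> M0 N0 N0' _ IH f [n|M1 M2|B] //= [<- /IH [M2' ? ->]].
  by exists (App M1 M2'); first apply: beta_appr.
- move=> M0 M0' _ IH f [n|M1 M2|B] //= [/IH [B' ? ->]].
  by exists (Lam B'); first apply: beta_lam.
Qed.

Lemma betas_rename_inv f M N : betas (rename f M) N ->
  exists2 M', betas M M' & N = rename f M'.
Proof.
move E : (rename f M) => X MN; elim: MN M E => {X N} [A|A B C AB _ IH] M E.
- by exists M; [apply: star_refl | rewrite E].
- subst A; have [M1 MM1 EB] := beta_rename_inv AB.
  have [M2 M1M2 ->] := IH _ (esym EB).
  by exists M2; first apply: star_step MM1 M1M2.
Qed.

(** * Confluence of beta-reduction *)

Inductive par : term -> term -> Prop :=
| par_var n : par (Var n) (Var n)
| par_app M M' N N' : par M M' -> par N N' -> par (App M N) (App M' N')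
| par_lam M M' : par M M' -> par (Lam M) (Lam M')
| par_beta M M' N N' : par M M' -> par N N' ->
    par (App (Lam M) N) (inst (subst0 N') M').

Lemma par_refl M : par M M.
Proof. by elim: M => *; constructor. Qed.

Lemma beta_par M N : beta M N -> par M N.
Proof. by elim=> *; constructor; by [|apply: par_refl]. Qed.

Lemma par_betas M N : par M N -> betas M N.
Proof.
elim=> {M N} [n|||M M' N N' _ MM' _ NN'].
- exact: star_refl.
- by move=> *; apply: betas_app.
- by move=> *; apply: betas_lam.
- exact: star_trans (betas_app (betas_lam MM') NN') (star1 (beta_redex _ _)).
Qed.

Lemma par_rename M N f : par M N -> par (rename f M) (rename f N).
Proof.
move=> MN; elim: MN f => {M N} /= [n f|||M M' N N' _ MM' _ NN' f].
- exact: par_var.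
- by move=> *; apply: par_app.
- by move=> *; apply: par_lam.
- by rewrite rename_subst0; apply: par_beta.
Qed.

Lemma par_inst M N s t : par M N -> (forall n, par (s n) (t n)) ->
  par (inst s M) (inst t N).
Proof.
have par_upsub s' t' : (forall n, par (s' n) (t' n)) ->
    forall n, par (upsub s' n) (upsub t' n).
  by move=> st [|n] /=; [apply: par_var | apply: par_rename].
move=> MN; elim: MN s t => {M N} /= [n s t st|||M M' N N' _ MM' _ NN' s t st].
- exact: st.
- by move=> *; apply: par_app; auto.
- by move=> *; apply: par_lam; auto.
- by rewrite inst_subst0; apply: par_beta; auto.
Qed.

Fixpoint develop (M : term) : term :=
  match M with
  | Var n => Var n
  | Lam M1 => Lam (develop M1)
  | App (Lam B) N => inst (subst0 (develop N)) (develop B)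
  | App M1 N => App (develop M1) (develop N)
  end.

Lemma par_develop M N : par M N -> par N (develop M).
Proof.
elim=> {M N} /= [n|M M' N N' MM' IHM _ IHN||M M' N N' _ MM' _ NN'].
- exact: par_var.
- case: M MM' IHM => [n|A B|B] MM' IHM /=; try exact: par_app.
  by inversion MM'; subst; inversion IHM; subst; apply: par_beta.
- by move=> *; apply: par_lam.
- by apply: par_inst => // -[|n] //=; apply: par_var.
Qed.

Lemma par_strip M N1 N2 : par M N1 -> star par M N2 ->
  exists2 P, star par N1 P & par N2 P.
Proof.
move=> MN1 MN2; elim: MN2 N1 MN1 => [A|A B C AB _ IH] N1 AN1.
- by exists N1; first apply: star_refl.
- have [P BP CP] := IH _ (par_develop AB).
  by exists P; first apply: star_step (par_develop AN1) BP.
Qed.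

Lemma betas_confluent M N1 N2 : betas M N1 -> betas M N2 ->
  exists2 P, betas N1 P & betas N2 P.
Proof.
have to_par : forall x y, betas x y -> star par x y.
  by apply: star_sub_star => x y /beta_par/star1.
have of_par : forall x y, star par x y -> betas x y.
  by apply: star_sub_star => x y /par_betas.
move=> /to_par MN1 /to_par; elim: MN1 N2 => [A|A B C AB _ IH] N2 AN2.
- by exists N2; [apply: of_par | apply: star_refl].
- have [P BP N2P] := par_strip AB AN2.
  have [Q CQ PQ] := IH _ BP.
  by exists Q => //; apply: star_trans (par_betas N2P) PQ.
Qed.

(** * Head normal forms *)

Lemma apps_rcons h Ms M : apps h (rcons Ms M) = App (apps h Ms) M.
Proof. by rewrite /apps foldl_rcons. Qed.

Lemma rename_apps f Ms : forall h,
  rename f (apps h Ms) = apps (rename f h) (map (rename f) Ms).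
Proof. by elim: Ms => [|M Ms IH] h //=; rewrite IH. Qed.

Lemma rename_lams n : forall f M,
  rename f (lams n M) = lams n (rename (iter n upren f) M).
Proof.
elim: n => [|n IH] f M //.
by rewrite [LHS]/= IH -iterSr.
Qed.

Lemma iter_upren n : forall f j,
  iter n upren f j = if j < n then j else n + f (j - n).
Proof.
elim: n => [|n IH] f j; first by rewrite subn0.
rewrite iterS; case: j => [|j] //=.
by rewrite IH ltnS subSS addSn; case: (j < n).
Qed.

Lemma apps_var_neq_lam y Ms B : apps (Var y) Ms <> Lam B.
Proof. by case/lastP: Ms => [|Ms M] //; rewrite apps_rcons. Qed.

Lemma apps_var_inj y y' Ms : forall Ms',
  apps (Var y) Ms = apps (Var y') Ms' -> y = y' /\ Ms = Ms'.
Proof.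
elim/last_ind: Ms => [|Ms M IH] Ms'; case/lastP: Ms' => [|Ms' M'];
  rewrite ?apps_rcons //=.
- by case=> ->.
- by case=> /IH [-> ->] ->.
Qed.

Lemma hnf_inj n : forall n' y y' Ms Ms',
  lams n (apps (Var y) Ms) = lams n' (apps (Var y') Ms') ->
  [/\ n = n', y = y' & Ms = Ms'].
Proof.
elim: n => [|n IH] [|n'] y y' Ms Ms' /=.
- by case/apps_var_inj => -> ->.
- by move/apps_var_neq_lam.
- by move/esym/apps_var_neq_lam.
- by case=> /IH [-> -> ->].
Qed.

Lemma rename_apps_inv f y Qs : forall A, rename f A = apps (Var y) Qs ->
  exists v Qs0, [/\ A = apps (Var v) Qs0, f v = y & Qs = map (rename f) Qs0].
Proof.
elim/last_ind: Qs => [|Qs Q IH] A.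
- by case: A => // v [<-]; exists v, [::].
- rewrite apps_rcons; case: A => // A Q0 /= [/IH [v [Qs0 [-> fv ->]]] <-].
  by exists v, (rcons Qs0 Q0); rewrite apps_rcons map_rcons.
Qed.

Lemma rename_hnf_inv m : forall f A y Qs,
  rename f A = lams m (apps (Var y) Qs) ->
  exists v Qs0, [/\ A = lams m (apps (Var v) Qs0), iter m upren f v = y &
                    Qs = map (rename (iter m upren f)) Qs0].
Proof.
elim: m => [|m IH] f A y Qs; first exact: rename_apps_inv.
case: A => // A /= [/IH [v [Qs0 [-> fv ->]]]].
by exists v, Qs0; rewrite -iterS iterSr.
Qed.

Definition pointwise (R : term -> term -> Prop) (Ms Ns : seq term) :=
  size Ms = size Ns /\
  forall i, i < size Ms -> R (nth (Var 0) Ms i) (nth (Var 0) Ns i).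

Lemma pointwise_rcons R Ms Ns M N :
  pointwise R Ms Ns -> R M N -> pointwise R (rcons Ms M) (rcons Ns N).
Proof.
move=> [sMN MN] RMN; split; first by rewrite !size_rcons sMN.
move=> i; rewrite size_rcons ltnS leq_eqVlt => /orP[/eqP->|lti].
- by rewrite !nth_rcons -sMN ltnn eqxx.
- by rewrite !nth_rcons -sMN lti; apply: MN.
Qed.

Lemma pointwise_betas_refl Ms : pointwise betas Ms Ms.
Proof. by split=> // i _; apply: star_refl. Qed.

Lemma pointwise_betas_trans Ms Ns Ps :
  pointwise betas Ms Ns -> pointwise betas Ns Ps -> pointwise betas Ms Ps.
Proof.
move=> [sMN MN] [sNP NP]; split; first by rewrite sMN.
by move=> i lti; apply: star_trans (MN _ lti) (NP _ _); rewrite -sMN.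
Qed.

Lemma beta_apps_var y Ms : forall P, beta (apps (Var y) Ms) P ->
  exists2 Ms', P = apps (Var y) Ms' & pointwise betas Ms Ms'.
Proof.
elim/last_ind: Ms => [|Ms M IH] P; first by move=> H; inversion H.
rewrite apps_rcons => H; inversion H; subst.
- by case: (apps_var_neq_lam (esym H1)).
- have [Ms' -> MMs'] := IH _ H3.
  exists (rcons Ms' M); first by rewrite apps_rcons.
  by apply: pointwise_rcons => //; apply: star_refl.
- exists (rcons Ms N'); first by rewrite apps_rcons.
  by apply: pointwise_rcons; [apply: pointwise_betas_refl | apply: star1].
Qed.

Lemma beta_hnf n y Ms : forall P, beta (lams n (apps (Var y) Ms)) P ->
  exists2 Ms', P = lams n (apps (Var y) Ms') & pointwise betas Ms Ms'.
Proof.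
elim: n => [|n IH] P; first exact: beta_apps_var.
move=> H; inversion H; subst.
by have [Ms' -> MMs'] := IH _ H1; exists Ms'.
Qed.

Lemma betas_hnf n y Ms P : betas (lams n (apps (Var y) Ms)) P ->
  exists2 Ms', P = lams n (apps (Var y) Ms') & pointwise betas Ms Ms'.
Proof.
move E : (lams n _) => X XP; elim: XP Ms E => {X P} [A|A B C AB _ IH] Ms E.
- by exists Ms; [rewrite E | apply: pointwise_betas_refl].
- subst A; have [Ms1 EB MMs1] := beta_hnf AB.
  have [Ms2 -> M1M2] := IH _ (esym EB).
  by exists Ms2 => //; apply: pointwise_betas_trans MMs1 M1M2.
Qed.

Definition joinable M N := exists2 P, betas M P & betas N P.

Lemma betas_hnf_unique M n y Ms n' y' Ms' :
  betas M (lams n (apps (Var y) Ms)) -> betas M (lams n' (apps (Var y') Ms')) ->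
  [/\ n = n', y = y' & pointwise joinable Ms Ms'].
Proof.
move=> MMs MMs'; have [P HP HP'] := betas_confluent MMs MMs'.
have [L1 E1 [sL1 PL1]] := betas_hnf HP.
have [L2 E2 [sL2 PL2]] := betas_hnf HP'.
rewrite E1 in E2; have [-> -> EL] := hnf_inj E2; subst L2.
split=> //; split; first by rewrite sL1 sL2.
move=> i lti; exists (nth (Var 0) L1 i); first exact: PL1.
by apply: PL2; rewrite sL2 -sL1.
Qed.

Lemma joinable_has_hnf M N : joinable M N -> has_hnf M -> has_hnf N.
Proof.
move=> [P MP NP] [n [y [Ms MMs]]].
have [T HT PT] := betas_confluent MMs MP.
have [Ms' ET _] := betas_hnf HT.
by exists n, y, Ms'; rewrite -ET; apply: star_trans NP PT.
Qed.

Lemma betas_lam_inv M N : betas (Lam M) N -> exists2 N', N = Lam N' & betas M N'.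
Proof.
move E : (Lam M) => X XN; elim: XN M E => {X N} [A|A B C AB _ IH] M E.
- by exists M; [rewrite E | apply: star_refl].
- subst A; inversion AB as [| | | M0 M' MM']; subst.
  by have [N' -> M'N'] := IH _ erefl; exists N' => //; apply: star_step MM' M'N'.
Qed.

(** * Böhm trees *)

Lemma IsBT_joinable M N U : joinable M N -> IsBT N U -> IsBT M U.
Proof.
move=> MN [R [bR RNU]].
exists (fun M U => exists2 N, joinable M N & R N U); split; last by exists N.
move=> {MN} {}M {}U [{}N [P MP NP] {}RNU].
case: (bR _ _ RNU) => [[-> noN]|[n [y [Ms [Us [NMs -> sUs RMsUs]]]]]].
  by left; split=> // /(joinable_has_hnf (ex_intro2 _ _ P MP NP)).
right; have [T HT PT] := betas_confluent NMs NP.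
have [Ms' ET [sMs' MsMs']] := betas_hnf HT.
exists n, y, Ms', Us; split=> //; first by rewrite -ET; apply: star_trans MP PT.
  by rewrite sUs.
move=> j ltj; exists (nth (Var 0) Ms j); last by apply: RMsUs; rewrite sMs'.
by exists (nth (Var 0) Ms' j); [apply: star_refl | apply: MsMs'; rewrite sMs'].
Qed.

Lemma IsBT_hnf A U n y Ms : IsBT A U -> betas A (lams n (apps (Var y) Ms)) ->
  exists Us, [/\ U = Node n y Us, size Us = size Ms &
    forall j, j < size Ms -> IsBT (nth (Var 0) Ms j) (nth Bot Us j)].
Proof.
move=> [R [bR RAU]] AMs.
case: (bR _ _ RAU) => [[_ []]|[n' [y' [Ms' [Us [AMs' -> sUs RMsUs]]]]]].
  by exists n, y, Ms.
have [<- <- [sMs MsMs']] := betas_hnf_unique AMs AMs'.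
exists Us; split; rewrite ?sMs // => j ltj.
apply: IsBT_joinable (MsMs' j _) _; first by rewrite sMs.
by exists R; split=> //; apply: RMsUs.
Qed.

Lemma IsBT_Node A n y Us : IsBT A (Node n y Us) ->
  exists Ms, [/\ betas A (lams n (apps (Var y) Ms)), size Us = size Ms &
    forall j, j < size Ms -> IsBT (nth (Var 0) Ms j) (nth Bot Us j)].
Proof.
move=> [R [bR RAU]].
case: (bR _ _ RAU) => [[//]|[n' [y' [Ms [Us' [AMs [-> -> ->] sUs RMsUs]]]]]].
by exists Ms; split=> // j ltj; exists R; split=> //; apply: RMsUs.
Qed.

(** * Finite eta-expansions of a variable *)

Lemma betaetas_lams n M M' : betaetas M M' -> betaetas (lams n M) (lams n M').
Proof. by elim: n => [|n IH] // /IH; apply: betaetas_lam. Qed.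

Lemma betaetas_apps h h' Ms Ms' : betaetas h h' -> pointwise betaetas Ms Ms' ->
  betaetas (apps h Ms) (apps h' Ms').
Proof.
elim: Ms h h' Ms' => [|M Ms IH] h h' [|M' Ms'] hh' [//= sMs MsMs'].
apply: IH; first exact: betaetas_app hh' (MsMs' 0 _).
by split=> [|i /(MsMs' i.+1)]; first case: sMs.
Qed.

Fixpoint downvars (m : nat) : seq term :=
  if m is m'.+1 then rcons (map (rename S) (downvars m')) (Var 0) else [::].

Lemma size_downvars m : size (downvars m) = m.
Proof. by elim: m => //= m IH; rewrite size_rcons size_map IH. Qed.

Lemma nth_downvars m i : i < m -> nth (Var 0) (downvars m) i = Var (m - i.+1).
Proof.
elim: m i => [|m IH] i // lti /=.
rewrite nth_rcons size_map size_downvars; case: ltnP => leim.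
- by rewrite (nth_map (Var 0)) ?size_downvars // IH //=; congr Var; lia.
- have -> : i = m by lia.
  by rewrite eqxx subnn.
Qed.

Lemma eta_contract_var m k :
  betaetas (lams m (apps (Var (m + k)) (downvars m))) (Var k).
Proof.
elim: m => [|m IH]; first exact: star_refl.
apply: star_trans IH; rewrite /lams iterSr -/(lams m _) /= apps_rcons.
have -> : apps (Var (m.+1 + k)) (map (rename S) (downvars m)) =
          rename S (apps (Var (m + k)) (downvars m)) by rewrite rename_apps.
by apply/betaetas_lams/star1/be_eta.
Qed.

(* [eta_tree U k b]: [U] is the Böhm tree of a finite eta-expansion
   [\z_1 .. z_m. k Z_1 .. Z_m] of the variable [k], each [Z_i] an eta-expansion
   of [z_i] (de Bruijn index [m - i.+1]), of size at most [b] as measured by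
   [esize]. *)
Inductive eta_tree : blt -> nat -> nat -> Prop :=
| EtaNode m k b Us : size Us = m -> m <= b ->
    (forall i, i < m -> eta_tree (nth Bot Us i) (m - i.+1) b.-1) ->
    eta_tree (Node m (m + k) Us) k b.

Lemma eta_tree_mono U k b b' : eta_tree U k b -> b <= b' -> eta_tree U k b'.
Proof.
move=> UT; elim: UT b' => {U k b} m k b Us sUs leb _ IH b' leb'.
apply: EtaNode => //; first exact: leq_trans leb'.
by move=> i lti; apply: IH => //; lia.
Qed.

Lemma eta_tree_betaetas U k b A : eta_tree U k b -> IsBT A U -> betaetas A (Var k).
Proof.
move=> UT; elim: UT A => {U k b} m k b Us sUs _ _ IH A /IsBT_Node[Ms [AMs sMs MsUs]].
apply: star_trans (betas_betaetas AMs) (star_trans _ (eta_contract_var m k)).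
apply/betaetas_lams/betaetas_apps; first exact: star_refl.
split=> [|i lti]; first by rewrite size_downvars -sMs.
have ltim : i < m by rewrite -sUs sMs.
by rewrite nth_downvars //; apply: IH => //; apply: MsUs.
Qed.

(** * Sizes of eta-trees *)

(* [Lam (rename f A)] abstracts the free variable [k] of [A]. *)
Definition binds (f : nat -> nat) (k : nat) := forall j, (f j == 0) = (j == k).

Definition bind_ren (k j : nat) : nat := if j == k then 0 else j.+1.

Lemma bindvarE k M : bindvar k M = Lam (rename (bind_ren k) M).
Proof. by []. Qed.

Lemma bind_ren_binds k : binds (bind_ren k) k.
Proof. by move=> j; rewrite /bind_ren; case: (j == k). Qed.

Lemma binds_under_lams f m k : k < m -> binds (bind_ren k \o iter m upren f) k.
Proof.
move=> ltkm j /=; rewrite bind_ren_binds iter_upren.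
by case: ltnP => // lejm; apply/eqP/eqP; lia.
Qed.

Lemma iter_upren_binds f k m v : binds f k -> (iter m upren f v == m) = (v == m + k).
Proof.
move=> fk; rewrite iter_upren; case: ltnP => lemv; first by apply/eqP/eqP; lia.
by rewrite -[m in _ == m]addn0 eqn_add2l fk; apply/eqP/eqP; lia.
Qed.

Lemma betas_binds_hnf f k A m Qs : binds f k ->
  betas (Lam (rename f A)) (lams m.+1 (apps (Var m) Qs)) ->
  exists2 Qs0, betas A (lams m (apps (Var (m + k)) Qs0)) &
               Qs = map (rename (iter m upren f)) Qs0.
Proof.
move=> fk /betas_lam_inv [N [<-]] /betas_rename_inv [A1 AA1 /esym].
case/rename_hnf_inv=> v [Qs0 [EA1 /eqP fv ->]]; exists Qs0 => //.
by move: fv AA1; rewrite EA1 (iter_upren_binds _ _ fk) => /eqP <-.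
Qed.

Lemma leq_nth_foldr_maxn l i : i < size l -> nth 0 l i <= foldr maxn 0 l.
Proof.
elim: l i => [|x l IH] [|i] //= lti; first exact: leq_maxl.
exact: leq_trans (IH _ lti) (leq_maxr _ _).
Qed.

Lemma foldr_maxn_leq l b :
  (forall i, i < size l -> nth 0 l i <= b) -> foldr maxn 0 l <= b.
Proof.
elim: l => [|x l IH] //= lelb; rewrite geq_max (lelb 0) //=.
by apply: IH => i /(lelb i.+1).
Qed.

Lemma esize_eta_tree X s : esize X s -> forall f k A U,
  X = Lam (rename f A) -> binds f k -> IsBT A U -> eta_tree U k s.
Proof.
elim=> {X s} [Q QI|Q m Qs ss Qhnf sQs sss _ IH] f k A U EQ fk AU;
  subst Q.
  have [[|//] AQs0 _] := betas_binds_hnf (m := 0) (Qs := [::]) fk QI.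
  have [Us [-> sUs _]] := IsBT_hnf AU AQs0.
  by apply: EtaNode; rewrite // sUs.
have [Qs0 AQs0 Qs0E] := betas_binds_hnf fk Qhnf.
have [Us [-> sUs Qs0Us]] := IsBT_hnf AU AQs0.
have sQs0 : size Qs0 = m by rewrite -sQs Qs0E size_map.
apply: EtaNode; rewrite ?sUs ?leq_maxl // => i lti.
have lti0 : i < size Qs0 by rewrite sQs0.
have bound : m - i.+1 < m by lia.
apply: eta_tree_mono (IH i lti _ _ _ _ _ (binds_under_lams f bound) (Qs0Us i lti0)) _.
  by rewrite bindvarE Qs0E (nth_map (Var 0)) // rename_comp.
have le_child : (nth 0 ss i).+1 <= foldr maxn 0 (map S ss).
  by rewrite -(nth_map 0 0 S) ?sss //; apply: leq_nth_foldr_maxn; rewrite size_map sss.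
by have := leq_maxr m (foldr maxn 0 (map S ss)); lia.
Qed.

Lemma eta_tree_lift c R : lift_sim c R -> forall U k b, eta_tree U k b ->
  forall d V, R d U V -> eta_tree V (if k < d then k else k + c) b.
Proof.
move=> liftR U k b; elim=> {U k b} m k b Us sUs leb _ IH d V RUV.
case: (liftR _ _ _ RUV) => [[//]|[n [y [Us' [Vs [[<- <- <-] -> sVs RUsVs]]]]]].
have -> : (if m + k < d + m then m + k else m + k + c) =
          m + (if k < d then k else k + c).
  by rewrite (addnC d) ltn_add2l; case: (k < d); rewrite ?addnA.
apply: EtaNode; rewrite ?sVs // => i lti.
have := IH i lti (d + m) _ (RUsVs i _); rewrite sUs => /(_ lti).
by have -> : m - i.+1 < d + m by lia.
Qed.

Lemma le_eta_eta_tree p R : le_sim p R -> forall U k b, eta_tree U k b ->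
  forall W, R U W -> eta_tree W k (b + p).
Proof.
move=> leR U k b; elim=> {U k b} m k b Us sUs leb _ IH W RUW.
case: (leR _ _ RUW) => [[//]|[n [y [l [m' [Us' [Vs [Qs]]]]]]]].
case=> lem'p [[<- <- <-] ->] [sUs' sVs sQs] QsE VsLift.
have {sUs'} lE : l = m by rewrite -sUs' sUs.
rewrite {l}lE in sVs VsLift.
rewrite -addnA [k + m']addnC addnA.
apply: EtaNode => [|//|i lti]; first by rewrite size_cat sVs sQs.
  lia.
rewrite nth_cat sVs; case: ltnP => leim.
  have [T [[R' [liftR' RTV]] RUsT]] := VsLift i leim.
  have := eta_tree_lift liftR' (IH i leim T RUsT) RTV; rewrite ltn0 /=.
  have -> : m + m' - i.+1 = m - i.+1 + m' by lia.
  by move/eta_tree_mono; apply; lia.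
have [|Q' [Q'Q [_ [s [Q's ltsp]]]]] := QsE (i - m); first lia.
have := esize_eta_tree Q's erefl (bind_ren_binds _) Q'Q.
have -> : m' - (i - m).+1 = m + m' - i.+1 by lia.
by move/eta_tree_mono; apply; lia.
Qed.

Lemma finite_choice (P : nat -> nat -> Prop) n :
  (forall i, i < n -> exists x, P i x) ->
  exists2 l, size l = n & forall i, i < n -> P i (nth 0 l i).
Proof.
elim: n => [|n IH] exP; first by exists [::].
have [|l sl Pl] := IH; first by move=> i lti; apply: exP; lia.
have [x Px] := exP n (ltnSn n).
exists (rcons l x) => [|i]; first by rewrite size_rcons sl.
rewrite ltnS leq_eqVlt nth_rcons sl => /orP[/eqP->|lti]; first by rewrite ltnn eqxx.
by rewrite lti; apply: Pl.
Qed.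

Lemma eta_tree_esize U k b A f : eta_tree U k b -> IsBT A U -> binds f k ->
  exists2 s, s <= b & esize (Lam (rename f A)) s.
Proof.
move=> UT; elim: UT A f => {U k b} m k b Us sUs leb _ IH A f.
move=> /IsBT_Node[Ms [AMs sMs MsUs]] fk.
pose g := iter m upren f.
pose child_size i s :=
  s <= b.-1 /\ esize (bindvar (m - i.+1) (nth (Var 0) (map (rename g) Ms) i)) s.
have [ss sss ssP] : exists2 ss, size ss = m &
    forall i, i < m -> child_size i (nth 0 ss i).
  apply: finite_choice => i lti.
  have ltiMs : i < size Ms by rewrite -sMs sUs.
  have bound : m - i.+1 < m by lia.
  have [s les Ms_s] := IH i lti _ _ (MsUs i ltiMs) (binds_under_lams f bound).
  by exists s; rewrite /child_size bindvarE (nth_map (Var 0)) // rename_comp.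
exists (maxn m (foldr maxn 0 (map S ss))).
  rewrite geq_max leb; apply: foldr_maxn_leq => i; rewrite size_map sss => lti.
  by rewrite (nth_map 0) ?sss //; have [] := ssP i lti; lia.
apply: (esize_hnf (Qs := map (rename g) Ms)); rewrite ?size_map -?sMs //.
- have head : iter m upren f (m + k) = m by apply/eqP; rewrite (iter_upren_binds _ _ fk).
  have := betas_lam (betas_rename f AMs).
  by rewrite rename_lams rename_apps /= head.
- by move=> i /ssP[].
Qed.

Theorem mainTheorem16 (p p' : nat) (Q Q' : term) :
  inEp p (Lam Q) ->
  (exists U U' : blt, [/\ IsBT Q U, IsBT Q' U' & le_eta p' U U']) ->
  inEp (p + p') (Lam Q').
Proof.
move=> [_ [s [Qs ltsp]]] [U [U' [QU Q'U' [R [leR RUU']]]]].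
have id_binds : binds id 0 by [].
have UT : eta_tree U 0 s.
  by apply: esize_eta_tree Qs _ _ _ _ _ id_binds QU; rewrite rename_id.
have U'T := le_eta_eta_tree leR UT RUU'.
have [s' les' Q's'] := eta_tree_esize U'T Q'U' id_binds.
split; first exact: betaetas_lam (eta_tree_betaetas U'T Q'U').
by exists s'; rewrite rename_id in Q's'; split=> //; lia.
Qed.
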